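(* Let $(V,g)$ be a Euclidean vector space and $\mathfrak{g}\subseteq\mathfrak{so}(V)$ a Lie subalgebra. Suppose there exists $T\in\Lambda^3V$ which is $\mathfrak{g}$-invariant, non-degenerate (i.e. $X\lrcorner T=0$ implies $X=0$) and satisfies $X\lrcorner T\in\mathfrak{g}^{\perp}$ for all $X\in V$. Then $\mathrm{Ric}(R)=0$ for every $R\in\mathcal{K}(\mathfrak{g},V)$.
   Context: $\Lambda^2V$ is identified with $\mathfrak{so}(V)$ via $F\mapsto g(F\cdot,\cdot)$; $\mathfrak{g}^\perp$ is the orthogonal complement of $\mathfrak{g}$ in $\Lambda^2V$. $\mathcal{K}(\mathfrak{g},V)$ is the space of algebraic curvature tensors with values in $\mathfrak{g}$: $R\in\Lambda^2V\otimes\Lambda^2V$ with $R(X,Y)\in\mathfrak{g}$ for all $X,Y$ and satisfying the first Bianchi identity $\sum_i e_i\wedge R(e_i,X)=0$ for all $X$ (equivalently, $R$ is symmetric in the two pairs and its total alternation in $\Lambda^4V$ vanishes). The Ricci contraction is $\mathrm{Ric}(R)(X,Y)=\sum_iR(X,e_i,Y,e_i)$ for an orthonormal basis $\{e_i\}$. *)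

(* V = R^n (column vectors 'cV[R]_n) with the standard
   Euclidean inner product; {e_i} the standard orthonormal basis.
   R is any real field (the statement is purely algebraic). *)
From HB Require Import structures.
From mathcomp Require Import all_boot all_order all_algebra.
Set Implicit Arguments. Unset Strict Implicit. Unset Printing Implicit Defensive.
Import Order.TTheory GRing.Theory Num.Theory.
Local Open Scope ring_scope.

Section Defs.
Variables (R : realFieldType) (n : nat).

(* Multilinear forms in coordinates w.r.t. the orthonormal basis e_i. *)
Definition form2 := 'I_n -> 'I_n -> R.
Definition form3 := 'I_n -> 'I_n -> 'I_n -> R.
Definition form4 := 'I_n -> 'I_n -> 'I_n -> 'I_n -> R.

(* so(V): a matrix A acts on column vectors, X |-> A *m X. *)
Definition skew (A : 'M[R]_n) : Prop := A^T = - A.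

(* The identification Lambda^2 V = so(V), F |-> g(F.,.):
   the 2-form w corresponds to the endomorphism A with g(A Y, Z) = w(Y,Z),
   i.e. A k j = w j k. *)
Definition endo_of_form2 (w : form2) : 'M[R]_n := \matrix_(k, j) w j k.

Definition lie_subalgebra (g : 'M[R]_n -> Prop) : Prop :=
  [/\ g 0,
      forall (a : R) A B, g A -> g B -> g (a *: A + B),
      forall A B, g A -> g B -> g (A *m B - B *m A)
    & forall A, g A -> skew A].

(* inner product on Lambda^2 V = so(V) (a positive multiple of the induced
   one; orthogonal complements do not depend on the factor). *)
Definition ip2 (A B : 'M[R]_n) : R := \sum_(i < n) \sum_(j < n) A i j * B i j.

Definition perp (g : 'M[R]_n -> Prop) (A : 'M[R]_n) : Prop :=
  skew A /\ forall B, g B -> ip2 A B = 0.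

Definition alt3 (T : form3) : Prop :=
  (forall i j k, T i j k = - T j i k) /\ (forall i j k, T i j k = - T i k j).

Definition contr (X : 'cV[R]_n) (T : form3) : 'M[R]_n :=
  endo_of_form2 (fun j k => \sum_(i < n) X i 0 * T i j k).

Definition act3 (A : 'M[R]_n) (T : form3) : form3 :=
  fun i j k => - \sum_(l < n) (A l i * T l j k + A l j * T i l k + A l k * T i j l).

Definition invariant3 (g : 'M[R]_n -> Prop) (T : form3) : Prop :=
  forall A, g A -> forall i j k, act3 A T i j k = 0.

Definition nondegenerate3 (T : form3) : Prop :=
  forall X : 'cV[R]_n, contr X T = 0 -> X = 0.

Definition curv_at (Rc : form4) (X Y : 'cV[R]_n) : form2 :=
  fun k l => \sum_(i < n) \sum_(j < n) X i 0 * Y j 0 * Rc i j k l.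

Definition in_L2L2 (Rc : form4) : Prop :=
  (forall i j k l, Rc i j k l = - Rc j i k l) /\
  (forall i j k l, Rc i j k l = - Rc i j l k).

(* e_a /\ w, for a 2-form w *)
Definition wedge12 (a : 'I_n) (w : form2) : form3 :=
  fun p q r => (p == a)%:R * w q r - (q == a)%:R * w p r + (r == a)%:R * w p q.

(* first Bianchi identity: sum_i e_i /\ R(e_i, X) = 0 for all X *)
Definition bianchi (Rc : form4) : Prop :=
  forall X : 'cV[R]_n, forall p q r,
    \sum_(i < n) wedge12 i (curv_at Rc (delta_mx i 0) X) p q r = 0.

Definition curvature_tensor (g : 'M[R]_n -> Prop) (Rc : form4) : Prop :=
  [/\ in_L2L2 Rc,
      forall X Y : 'cV[R]_n, g (endo_of_form2 (curv_at Rc X Y))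
    & bianchi Rc].

Definition ricci (Rc : form4) (X Y : 'cV[R]_n) : R :=
  \sum_(i < n) \sum_(a < n) \sum_(b < n) X a 0 * Y b 0 * Rc a i b i.

End Defs.

(* Write R_abkl = R(e_a,e_b,e_k,e_l) and T_ijk = T(e_i,e_j,e_k).  The
   hypotheses on g enter only through the endomorphisms R(e_a,e_b), which lie
   in g; they give three coordinate identities:
   (O) R(e_a,e_b) is orthogonal to e_z _| T:   sum_kl R_abkl T_zkl = 0;
   (I) R(e_a,e_b) annihilates T:
         sum_l R_abil T_ljk + R_abjl T_ilk + R_abkl T_ijl = 0;
   (B) the first Bianchi identity:  R_pbqr - R_qbpr + R_rbpq = 0.
   From (B), (O) and the skew-symmetries of R and T, the mixed contraction
   M_bjk = sum_il R_ibjl T_ilk satisfies 2 M = 0.  Tracing (I) over a = i, two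
   of its three terms are mixed contractions, so the vector
   rho^b_m = sum_i R_ibim satisfies rho^b _| T = 0, and nondegeneracy of T
   forces rho^b = 0.  By pair skew-symmetry Ric(e_a,e_c) = rho^a_c = 0.
   The file first computes on basis vectors, then proves the algebraic core
   from (O), (I), (B), then derives (O), (I), (B) from the hypotheses. *)
From HB Require Import structures.
From mathcomp Require Import all_boot all_order all_algebra.
Import Order.TTheory GRing.Theory Num.Theory.
Local Open Scope ring_scope.

Lemma sum_delta (R : pzRingType) n (p : 'I_n) (F : 'I_n -> R) :
  \sum_(i < n) (i == p)%:R * F i = F p.
Proof.
rewrite (bigD1 p) //= eqxx mul1r big1 ?addr0 // => i ne_ip.
by rewrite (negbTE ne_ip) mul0r.
Qed.

Lemma sum_deltaC (R : pzRingType) n (p : 'I_n) (F : 'I_n -> R) :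
  \sum_(i < n) (p == i)%:R * F i = F p.
Proof. by rewrite -(@sum_delta _ _ p F); apply: eq_bigr => i _; rewrite eq_sym. Qed.

Lemma curv_at_delta (R : realFieldType) n (Rc : form4 R n) a b k l :
  curv_at Rc (delta_mx a 0) (delta_mx b 0) k l = Rc a b k l.
Proof.
rewrite /curv_at.
transitivity (\sum_(i < n) (i == a)%:R * \sum_(j < n) (j == b)%:R * Rc i j k l).
  apply: eq_bigr => i _; rewrite mulr_sumr; apply: eq_bigr => j _.
  by rewrite !mxE !eqxx !andbT mulrA.
by rewrite sum_delta sum_delta.
Qed.

Lemma contrE (R : realFieldType) n (X : 'cV[R]_n) (T : form3 R n) k j :
  contr X T k j = \sum_(i < n) X i 0 * T i j k.
Proof. by rewrite /contr /endo_of_form2 mxE. Qed.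

Lemma contr_delta (R : realFieldType) n (T : form3 R n) z k j :
  contr (delta_mx z 0) T k j = T z j k.
Proof.
rewrite contrE -(@sum_delta _ _ z (fun i => T i j k)).
by apply: eq_bigr => i _; rewrite mxE eqxx andbT.
Qed.

(* The vector rho^b with rho^b_m = sum_i R_ibim; its entries are Ricci
   coefficients up to the pair skew-symmetry of R. *)
Definition ricci_vec {R : realFieldType} {n : nat} (Rc : form4 R n) (b : 'I_n) :
  'cV[R]_n :=
  \col_m \sum_(i < n) Rc i b i m.

Section AlgebraicCore.
Variables (R : realFieldType) (n : nat) (T : form3 R n) (Rc : form4 R n).
Hypotheses (alt_T : alt3 T) (skew_Rc : in_L2L2 Rc).
Hypothesis bianchi_Rc : forall p b q r, Rc p b q r - Rc q b p r + Rc r b p q = 0.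
Hypothesis orth_Rc :
  forall a b z, \sum_(k < n) \sum_(l < n) Rc a b k l * T z k l = 0.
Hypothesis annih_Rc : forall a b i j k, \sum_(l < n)
  (Rc a b i l * T l j k + Rc a b j l * T i l k + Rc a b k l * T i j l) = 0.

(* The mixed contraction sum_il R_ibjl T_ilk vanishes: by Bianchi it equals a
   term orthogonal by (O) minus itself. *)
Lemma mixed_contraction_eq0 b j k :
  \sum_(i < n) \sum_(l < n) Rc i b j l * T i l k = 0.
Proof.
case: alt_T => T12 T23; case: skew_Rc => _ R34.
set M := LHS.
have pair_term i l :
    Rc i b j l * T i l k + Rc l b j i * T l i k = Rc j b i l * T k i l.
  rewrite (T12 l i k) (T12 k i l) (T23 i k l) opprK mulrN -mulrBl (R34 l b j i).
  congr (_ * _); apply/eqP; rewrite opprK -subr_eq0 -(bianchi_Rc i b j l).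
  by rewrite addrAC.
have twiceM : M + M = \sum_(i < n) \sum_(l < n) Rc j b i l * T k i l.
  rewrite {2}/M exchange_big /= -big_split /=; apply: eq_bigr => i _.
  by rewrite -big_split /=; apply: eq_bigr => l _; apply: pair_term.
have : M *+ 2 == 0 by rewrite mulr2n twiceM orth_Rc.
by rewrite mulrn_eq0 => /eqP.
Qed.

(* Tracing (I) over its first index leaves rho^b _| T = 0. *)
Lemma ricci_vec_contr b : contr (ricci_vec Rc b) T = 0.
Proof.
case: alt_T => _ T23.
apply/matrixP => k j; rewrite contrE mxE.
have traced : \sum_(i < n) \sum_(m < n) (Rc i b i m * T m j k + Rc i b j m * T i m k
    + Rc i b k m * T i j m) = 0 by apply: big1 => i _; apply: annih_Rc.
have third : \sum_(i < n) \sum_(m < n) Rc i b k m * T i j m = 0.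
  rewrite -[RHS]oppr0 -[in RHS](mixed_contraction_eq0 b k j) -sumrN.
  apply: eq_bigr => i _.
  by rewrite -sumrN; apply: eq_bigr => m _; rewrite (T23 i j m) mulrN.
move: traced; under eq_bigr => i _ do rewrite big_split big_split /=.
rewrite big_split big_split /= third mixed_contraction_eq0 !addr0 => traced.
rewrite -[RHS]traced exchange_big /=; apply: eq_bigr => m _.
by rewrite mxE mulr_suml.
Qed.

Lemma ricci_vec_eq0 b : nondegenerate3 T -> ricci_vec Rc b = 0.
Proof. by move=> nondeg_T; apply: nondeg_T; apply: ricci_vec_contr. Qed.

(* Ric(e_a, e_c) = sum_i R_aici = sum_i R_iaic = rho^a_c, hence Ric = 0. *)
Lemma ricci_eq0 X Y : nondegenerate3 T -> ricci Rc X Y = 0.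
Proof.
move=> nondeg_T; case: skew_Rc => R12 R34.
rewrite /ricci exchange_big /=; apply: big1 => a _; rewrite exchange_big /=.
apply: big1 => c _; rewrite -mulr_sumr.
have rho_c := congr1 (fun v : 'cV[R]_n => v c 0) (ricci_vec_eq0 a nondeg_T).
rewrite /= !mxE in rho_c.
have pair_swap : \sum_(i < n) Rc a i c i = \sum_(i < n) Rc i a i c.
  by apply: eq_bigr => i _; rewrite (R12 a i c i) (R34 i a c i) opprK.
by rewrite pair_swap rho_c mulr0.
Qed.

End AlgebraicCore.

Lemma bianchi_coord (R : realFieldType) n (Rc : form4 R n) :
  bianchi Rc -> forall p b q r, Rc p b q r - Rc q b p r + Rc r b p q = 0.
Proof.
move=> bianchi_Rc p b q r; have := bianchi_Rc (delta_mx b 0) p q r.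
by rewrite /wedge12 big_split big_split /= sumrN !sum_deltaC !curv_at_delta.
Qed.

Lemma orth_coord (R : realFieldType) n (g : 'M[R]_n -> Prop) (T : form3 R n)
    (Rc : form4 R n) :
  (forall X Y : 'cV[R]_n, g (endo_of_form2 (curv_at Rc X Y))) ->
  (forall X : 'cV[R]_n, perp g (contr X T)) ->
  forall a b z, \sum_(k < n) \sum_(l < n) Rc a b k l * T z k l = 0.
Proof.
move=> g_Rc perp_T a b z.
case: (perp_T (delta_mx z 0)) => _ /(_ _ (g_Rc (delta_mx a 0) (delta_mx b 0))).
rewrite /ip2 => ortho; rewrite -[RHS]ortho exchange_big /=.
apply: eq_bigr => k _; apply: eq_bigr => l _.
by rewrite contr_delta /endo_of_form2 mxE curv_at_delta mulrC.
Qed.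

Lemma annih_coord (R : realFieldType) n (g : 'M[R]_n -> Prop) (T : form3 R n)
    (Rc : form4 R n) :
  (forall X Y : 'cV[R]_n, g (endo_of_form2 (curv_at Rc X Y))) ->
  invariant3 g T ->
  forall a b i j k, \sum_(l < n) (Rc a b i l * T l j k + Rc a b j l * T i l k
    + Rc a b k l * T i j l) = 0.
Proof.
move=> g_Rc inv_T a b i j k.
have := inv_T _ (g_Rc (delta_mx a 0) (delta_mx b 0)) i j k.
rewrite /act3 => /(congr1 -%R); rewrite opprK oppr0 => annih.
rewrite -[RHS]annih; apply: eq_bigr => l _.
by rewrite /endo_of_form2 !mxE !curv_at_delta.
Qed.

Theorem proposition2p4 (R : realFieldType) (n : nat)
    (g : 'M[R]_n -> Prop) (T : form3 R n) :
  lie_subalgebra g ->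
  alt3 T ->
  invariant3 g T ->
  nondegenerate3 T ->
  (forall X : 'cV[R]_n, perp g (contr X T)) ->
  forall Rc : form4 R n, curvature_tensor g Rc ->
  forall X Y : 'cV[R]_n, ricci Rc X Y = 0.
Proof.
move=> _ alt_T inv_T nondeg_T perp_T Rc [skew_Rc g_Rc bianchi_Rc] X Y.
apply: ricci_eq0 nondeg_T => //.
- exact: bianchi_coord.
- exact: orth_coord perp_T.
- exact: annih_coord inv_T.
Qed.
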